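(* Let $\mathcal{X}$ be a set, $\mathsf{B}_{\mathcal{X}}=\{-1,1\}^{\mathcal{X}}$, and let $\mathcal{U}_{\mathcal{X}}$ be the set of all unit covariances on $\mathcal{X}$, viewed as a (convex) subset of the real vector space $\mathscr{F}_{\mathcal{X}}$ of symmetric functions $\mathcal{X}\times\mathcal{X}\to\mathbb{R}$. Then the extreme points of $\mathcal{U}_{\mathcal{X}}$ are exactly the functions $u\otimes u$, $u\in\mathsf{B}_{\mathcal{X}}$, where $(u\otimes u)_{x,y}=u_xu_y$.
   Context: A unit field on $\mathcal{X}$ is a random element $X$ of $\mathsf{B}_{\mathcal{X}}=\{-1,1\}^{\mathcal{X}}$ (with the discrete structure). Its unit covariance is $\rho^X_{x,y}=\mathbf{E}[X_xX_y]=2\mathbb{P}(X_x=X_y)-1$, $x,y\in\mathcal{X}$. A symmetric function $\rho$ is a unit covariance if $\rho=\rho^X$ for some unit field $X$. An extreme point of a convex set $C$ is a point $x\in C$ such that whenever $x\in[y,z]$ with $y,z\in C$, then $x=y$ or $x=z$. *)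

From HB Require Import structures.
From mathcomp Require Import all_boot all_order all_algebra.
From mathcomp Require Import all_classical all_reals all_analysis.
Set Implicit Arguments. Unset Strict Implicit. Unset Printing Implicit Defensive.
Import Order.TTheory GRing.Theory Num.Theory.
Local Open Scope classical_set_scope.
Local Open Scope ring_scope.

Definition is_unit_vec (R : realType) (X : Type) (u : X -> R) : Prop :=
  forall x, u x = 1 \/ u x = -1.

Definition unit_field (R : realType) (X : Type) (d : measure_display)
  (T : measurableType d) (Fld : T -> X -> R) : Prop :=
  (forall w, is_unit_vec (Fld w)) /\
  (forall x, measurable_fun setT (fun w => Fld w x)).

Definition unit_cov (R : realType) (X : Type) (rho : X -> X -> R) : Prop :=
  exists (d : measure_display) (T : measurableType d) (P : probability T R)
         (Fld : T -> X -> R),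
    unit_field Fld /\
    forall x y, rho x y = 2 * fine (P [set w | Fld w x = Fld w y]) - 1.

Definition extreme_point (R : realType) (X : Type)
  (C : (X -> X -> R) -> Prop) (f : X -> X -> R) : Prop :=
  C f /\
  forall g h : X -> X -> R, C g -> C h ->
    (exists t : R, 0 <= t <= 1 /\
       forall x y, f x y = (1 - t) * g x y + t * h x y) ->
    f = g \/ f = h.

Definition tensor (R : realType) (X : Type) (u : X -> R) : X -> X -> R :=
  fun x y => u x * u y.

From HB Require Import structures.
From mathcomp Require Import all_boot all_order all_algebra.
From mathcomp Require Import all_classical all_reals all_analysis.
From mathcomp Require Import ring lra.
Import Order.TTheory GRing.Theory Num.Theory.
Set Implicit Arguments. Unset Strict Implicit.
Local Open Scope classical_set_scope.
Local Open Scope ring_scope.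

(* If P(X_x = X_y) lies strictly between 0 and 1, conditioning the field on
   the event {X_x = X_y} and on its complement writes rho as a strict convex
   combination of two unit covariances taking the values 1 and -1 at (x, y).
   Hence at an extreme point every such probability is 0 or 1, so X_x X_y is
   almost surely the constant rho_{x,y}; on the almost sure event where this
   holds for (x0, x), (x0, y) and (x, y) one reads off
   rho_{x,y} = rho_{x0,x} rho_{x0,y}.  Conversely u (x) u is the unit
   covariance of the constant field u, and its values +-1 are extreme points
   of [-1, 1], which contains every value of a unit covariance. *)

Section fine_probability.
Context (R : realType) (d : measure_display) (T : measurableType d)
  (P : probability T R).

Local Notation pr A := (fine (P A)).

Lemma probability_fine {A : set T} : measurable A -> P A = (pr A)%:E.
Proof. by move=> mA; rewrite fineK // fin_num_measure. Qed.

Lemma pr_ge0 {A : set T} : measurable A -> 0 <= pr A.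
Proof. by move=> mA; apply/fine_ge0/measure_ge0. Qed.

Lemma pr_le1 {A : set T} : measurable A -> pr A <= 1.
Proof.
by move=> mA; have := probability_le1 P mA; rewrite probability_fine // lee_fin.
Qed.

Lemma prC {A : set T} : measurable A -> pr (~` A) = 1 - pr A.
Proof. by move=> mA; rewrite probability_setC // fineB // fin_num_measure. Qed.

Lemma pr_le {A B : set T} : measurable A -> measurable B -> A `<=` B ->
  pr A <= pr B.
Proof.
move=> mA mB AB; apply: fine_le; rewrite ?fin_num_measure //.
by apply: le_measure; rewrite ?inE.
Qed.

Lemma pr_setID {A S : set T} : measurable A -> measurable S ->
  pr A = pr (A `&` S) + pr (A `&` ~` S).
Proof.
move=> mA mS; have mAS := measurableI _ _ mA mS.
have mASc := measurableI _ _ mA (measurableC mS).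
rewrite -fineD ?fin_num_measure // -measureU //; last first.
  by rewrite setIACA setICr setI0.
by rewrite -setIUr setUv setIT.
Qed.

Lemma prI_eq1 {A B : set T} : measurable A -> measurable B ->
  pr A = 1 -> pr B = 1 -> pr (A `&` B) = 1.
Proof.
move=> mA mB pA1 pB1; have mABc := measurableI _ _ mA (measurableC mB).
have := pr_le mABc (measurableC mB) (@subIsetr _ A (~` B)).
have := pr_setID mA mB; have := pr_ge0 mABc.
have := pr_le1 (measurableI _ _ mA mB); rewrite prC // pB1; lra.
Qed.

Lemma pr_eq1_nonempty {A : set T} : pr A = 1 -> A !=set0.
Proof.
apply: contra_eqP => /set0P/negP/negbNE/eqP ->.
by rewrite measure0 /= eq_sym oner_eq0.
Qed.

End fine_probability.

Section conditioning.
Context (R : realType) (d : measure_display) (T : measurableType d)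
  (P : probability T R).

Local Notation pr A := (fine (P A)).

Lemma pr_mnormalize_mrestr (S : set T) (mS : measurable S) (A : set T) :
  measurable A -> 0 < pr S ->
  fine (mnormalize (mrestr P mS) P A) = pr (A `&` S) / pr S.
Proof.
move=> mA pS_gt0; have PS : mrestr P mS setT = (pr S)%:E.
  by rewrite /mrestr setTI -(probability_fine P mS).
rewrite /mnormalize /= PS eqe gt_eqF //= /mrestr.
by rewrite (probability_fine P (measurableI _ _ mA mS)) -EFinM.
Qed.

Lemma probability_convex_split (S : set T) : measurable S -> 0 < pr S < 1 ->
  exists Q1 Q2 : probability T R,
    [/\ forall A, measurable A ->
          pr A = pr S * fine (Q1 A) + (1 - pr S) * fine (Q2 A),
        fine (Q1 S) = 1 & fine (Q2 S) = 0].
Proof.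
move=> mS /andP[pS_gt0 pS_lt1]; have mSc := measurableC mS.
have pSc_gt0 : 0 < pr (~` S) by rewrite prC //; lra.
exists (mnormalize (mrestr P mS) P), (mnormalize (mrestr P mSc) P); split.
- move=> A mA; rewrite !pr_mnormalize_mrestr // prC // (pr_setID P mA mS).
  by field; apply/andP; split; apply/eqP; lra.
- by rewrite pr_mnormalize_mrestr // setIid divff //; apply/eqP; lra.
- by rewrite pr_mnormalize_mrestr // setICr measure0 /= mul0r.
Qed.

End conditioning.

Lemma pm1_convex_combination_eq (R : realFieldType) (t a b c : R) :
  0 < t < 1 -> -1 <= a <= 1 -> -1 <= b <= 1 -> c = 1 \/ c = -1 ->
  c = (1 - t) * a + t * b -> c = a.
Proof.
move=> /andP[t_gt0 t_lt1] /andP[a_ge a_le] /andP[b_ge b_le] [] -> c_eq.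
- have : (1 - t) * (1 - a) = 0.
    have : 0 <= (1 - t) * (1 - a) by apply: mulr_ge0; lra.
    have : 0 <= t * (1 - b) by apply: mulr_ge0; lra.
    lra.
  by move/eqP; rewrite mulf_eq0 => /orP[] /eqP; lra.
- have : (1 - t) * (1 + a) = 0.
    have : 0 <= (1 - t) * (1 + a) by apply: mulr_ge0; lra.
    have : 0 <= t * (1 + b) by apply: mulr_ge0; lra.
    lra.
  by move/eqP; rewrite mulf_eq0 => /orP[] /eqP; lra.
Qed.

Lemma unit_vec_mul_eq1 (R : realType) (X : Type) (u : X -> R) (a b : X) :
  is_unit_vec u -> (u a * u b = 1 <-> u a = u b).
Proof.
by move=> hu; split; case: (hu a) => ->; case: (hu b) => -> //; lra.
Qed.

Lemma unit_vec_mul_eqN1 (R : realType) (X : Type) (u : X -> R) (a b : X) :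
  is_unit_vec u -> (u a * u b = -1 <-> u a <> u b).
Proof.
by move=> hu; split; case: (hu a) => ->; case: (hu b) => -> //; lra.
Qed.

Lemma tensor_unit_vec (R : realType) (X : Type) (u : X -> R) (a : X) :
  is_unit_vec u -> is_unit_vec (tensor u a).
Proof.
move=> hu b; have [] := boolP (u a == u b) => /eqP e.
- by left; apply/(unit_vec_mul_eq1 _ _ hu).
- by right; apply/(unit_vec_mul_eqN1 _ _ hu).
Qed.

Section unit_fields.
Context (R : realType) (X : Type) (d : measure_display) (T : measurableType d)
  (P : probability T R) (Fld : T -> X -> R).
Hypothesis hFld : unit_field Fld.

Local Notation pr A := (fine (P A)).

Definition coincide (a b : X) : set T := [set w | Fld w a = Fld w b].

Lemma measurable_coincide (a b : X) : measurable (coincide a b).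
Proof.
have -> : coincide a b = (fun w => Fld w a - Fld w b) @^-1` [set 0].
  apply/seteqP; split => w /=; first by move=> ->; rewrite subrr.
  by move/eqP; rewrite subr_eq0 => /eqP.
rewrite -(setTI (_ @^-1` _)).
exact: (measurable_realfun.measurable_funB (hFld.2 a) (hFld.2 b)).
Qed.

Lemma product_coincide (a b : X) :
  [set w | Fld w a * Fld w b = 1] = coincide a b.
Proof. by apply/funext => w; apply/propext/unit_vec_mul_eq1/hFld.1. Qed.

Lemma product_not_coincide (a b : X) :
  [set w | Fld w a * Fld w b = -1] = ~` coincide a b.
Proof. by apply/funext => w; apply/propext/unit_vec_mul_eqN1/hFld.1. Qed.

Lemma product_as_constant (a b : X) :
  pr (coincide a b) = 0 \/ pr (coincide a b) = 1 ->
  let E := [set w | Fld w a * Fld w b = 2 * pr (coincide a b) - 1] in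
  measurable E /\ pr E = 1.
Proof.
have mC := measurable_coincide a b.
case=> pC; rewrite /= pC ?mulr0 ?mulr1 ?add0r.
- rewrite product_not_coincide; split; first exact: measurableC.
  by rewrite prC // pC subr0.
- have -> : (2 - 1 : R) = 1 by lra.
  by rewrite product_coincide.
Qed.

Lemma extreme_pr_coincide (rho : X -> X -> R) :
  (forall x y, rho x y = 2 * pr (coincide x y) - 1) ->
  extreme_point (@unit_cov R X) rho ->
  forall x y, pr (coincide x y) = 0 \/ pr (coincide x y) = 1.
Proof.
move=> rhoE [_ rho_extreme] x y; have mC := measurable_coincide x y.
have := pr_ge0 P mC; rewrite le_eqVlt => /orP[/eqP <-|pC_gt0]; first by left.
have := pr_le1 P mC; rewrite le_eqVlt => /orP[/eqP ->|pC_lt1]; first by right.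
have pC01 : 0 < pr (coincide x y) < 1 by rewrite pC_gt0 pC_lt1.
have [Q1 [Q2 [PE Q1C Q2C]]] := probability_convex_split mC pC01.
pose cov (Q : probability T R) a b := 2 * fine (Q (coincide a b)) - 1.
have [] : rho = cov Q1 \/ rho = cov Q2.
  apply: rho_extreme; [by exists d, T, Q1, Fld | by exists d, T, Q2, Fld |].
  exists (1 - pr (coincide x y)); split; first by rewrite subr_ge0 ltW // gerBl ltW.
  by move=> a b; rewrite rhoE /cov (PE _ (measurable_coincide a b)); ring.
all: move=> /(congr1 (fun f => f x y)); rewrite rhoE /cov ?Q1C ?Q2C; lra.
Qed.

End unit_fields.

Lemma unit_cov_bounded (R : realType) (X : Type) (rho : X -> X -> R) :
  unit_cov rho -> forall x y, -1 <= rho x y <= 1.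
Proof.
move=> [d [T [P [Fld [hFld rhoE]]]]] x y; rewrite rhoE.
have mC := measurable_coincide hFld x y.
by have := pr_ge0 P mC; have := pr_le1 P mC; rewrite /coincide => ? ?; lra.
Qed.

Lemma unit_cov_tensor (R : realType) (X : Type) (u : X -> R) :
  is_unit_vec u -> unit_cov (tensor u).
Proof.
move=> hu; exists default_measure_display, R, (@dirac _ R 0 R), (fun=> u).
split; first by split=> // x; exact: measurable_cst.
move=> x y; rewrite /tensor; have [e|ne] := pselect (u x = u y).
- have -> : [set _ : R | u x = u y] = setT by apply/seteqP; split.
  by rewrite probability_setT /= (unit_vec_mul_eq1 _ _ hu).2 //; lra.
- have -> : [set _ : R | u x = u y] = set0 by apply/seteqP; split.
  by rewrite measure0 /= (unit_vec_mul_eqN1 _ _ hu).2 //; lra.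
Qed.

Lemma extreme_point_tensor (R : realType) (X : Type) (u : X -> R) :
  is_unit_vec u -> extreme_point (@unit_cov R X) (tensor u).
Proof.
move=> hu; split=> [|g h g_cov h_cov [t [/andP[t_ge0 t_le1] uuE]]].
  exact: unit_cov_tensor.
have [t0|t_neq0] := eqVneq t 0.
  by left; apply/funext => x; apply/funext => y; rewrite uuE t0; ring.
have [t1|t_neq1] := eqVneq t 1.
  by right; apply/funext => x; apply/funext => y; rewrite uuE t1; ring.
have t01 : 0 < t < 1 by rewrite !lt_neqAle eq_sym t_neq0 t_neq1 t_ge0 t_le1.
left; apply/funext => x; apply/funext => y.
apply: (pm1_convex_combination_eq t01 _ (unit_cov_bounded h_cov x y)) => //.
- exact: unit_cov_bounded.
- exact: tensor_unit_vec.
Qed.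

Lemma extreme_point_unit_cov_tensor (R : realType) (X : Type)
  (rho : X -> X -> R) : extreme_point (@unit_cov R X) rho ->
  exists u : X -> R, is_unit_vec u /\ rho = tensor u.
Proof.
move=> rho_extreme; have [[d [T [P [Fld [hFld rhoE]]]]] _] := rho_extreme.
have pC01 := extreme_pr_coincide hFld rhoE rho_extreme.
have [[x0 _]|X0] := pselect (exists x : X, True); last first.
  exists (fun=> 1); split; first by left.
  by apply/funext => x; case: X0; exists x.
exists (rho x0); split.
  by move=> x; rewrite rhoE; case: (pC01 x0 x) => ->; [right|left]; lra.
apply/funext => x; apply/funext => y; rewrite /tensor !rhoE.
have [m1 p1] := product_as_constant hFld (pC01 x0 x).
have [m2 p2] := product_as_constant hFld (pC01 x0 y).
have [m3 p3] := product_as_constant hFld (pC01 x y).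
have [w [[<- <-] <-]] := pr_eq1_nonempty
  (prI_eq1 (measurableI _ _ m1 m2) m3 (prI_eq1 m1 m2 p1 p2) p3).
by case: (hFld.1 w x0) => ->; ring.
Qed.

Theorem proposition1 (R : realType) (X : Type) (rho : X -> X -> R) :
  extreme_point (@unit_cov R X) rho <->
  exists u : X -> R, is_unit_vec u /\ rho = tensor u.
Proof.
split; first exact: extreme_point_unit_cov_tensor.
by move=> [u [hu ->]]; exact: extreme_point_tensor.
Qed.
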